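(* Let $n\in\mathbb{N}$ and $d\geq 3$. There exists an injective map $\Phi:\mathcal{P}_{n,d}\to\mathcal{P}_{n(n+1),d-1}$ such that $$\Phi(\mathcal{J}^{\rm lin}_{n,d})=\mathcal{J}^{\rm lin}_{n(n+1),d-1;n}\cap \Phi(\mathcal{P}_{n,d}),\qquad \Phi(\mathcal{J}_{n,d})=\mathcal{J}_{n(n+1),d-1;n}\cap \Phi(\mathcal{P}_{n,d}).$$
   Context: A polynomial system is a map $F:\mathbb{C}^n\to\mathbb{C}^n$ all of whose coordinate functions $F_j$ are polynomials; $\mathcal{P}_n$ denotes the set of these, and $\mathcal{P}_{n,d}$ the subset with total degree $\max_j\deg F_j\leq d$. The Jacobian matrix is $J_F(z)=(\partial F_j/\partial z_i)_{1\le i,j\le n}$. $\mathcal{J}^{\rm lin}_{n}$ is the set of $F\in\mathcal{P}_n$ with $\det J_F(z)=c$ for a constant $c\in\mathbb{C}^\times$ (independent of $z$), and $\mathcal{J}_n$ is the set of $F\in\mathcal{P}_n$ that are bijective with polynomial inverse; $\mathcal{J}^{\rm lin}_{n,d}=\mathcal{J}^{\rm lin}_n\cap\mathcal{P}_{n,d}$, $\mathcal{J}_{n,d}=\mathcal{J}_n\cap\mathcal{P}_{n,d}$. Partial versions: for $0\le n'\le n$ write $z=(z_1,z_2)\in\mathbb{C}^{n'}\times\mathbb{C}^{n-n'}$ and $F=(F_1,F_2)$ accordingly, and set $R(z_2;z_1):=F_2(z_1,z_2)$, viewed as a polynomial system in the variables $z_2\in\mathbb{C}^{n-n'}$ depending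 on the parameters $z_1$. When for each $z_1$ the map $R(\cdot;z_1)$ is in $\mathcal{J}_{n-n'}$, denote by $R^{-1}(\cdot;z_1)$ its inverse, so $R^{-1}(R(z_2;z_1);z_1)=z_2$. - $\mathcal{J}_{n,d;n'}$ is the set of $F\in\mathcal{P}_{n,d}$ such that $R(\cdot;z_1)\in\mathcal{J}_{n-n'}$ for all $z_1\in\mathbb{C}^{n'}$, and such that $F$ restricted to $F^{-1}(\mathbb{C}^{n'}\times\{0\})$ is a bijection onto $\mathbb{C}^{n'}\times\{0\}$ whose inverse $y_1\mapsto F^{-1}(y_1,0)$ is a polynomial map $\mathbb{C}^{n'}\to\mathbb{C}^{n}$. - $\mathcal{J}^{\rm lin}_{n,d;n'}$ is the set of $F\in\mathcal{P}_{n,d}$ such that $R(\cdot;z_1)\in\mathcal{J}_{n-n'}$ for all $z_1\in\mathbb{C}^{n'}$ and there is a constant $c\in\mathbb{C}^\times$ with $\det J_F(z_1,R^{-1}(0;z_1))=c$ for all $z_1\in\mathbb{C}^{n'}$. Here the dimension $n(n+1)$ is split as $n'=n$ first coordinates and $n^2$ remaining coordinates. *)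

From HB Require Import structures.
From mathcomp Require Import all_boot all_order all_algebra.
Set Implicit Arguments. Unset Strict Implicit. Unset Printing Implicit Defensive.
Import Order.TTheory GRing.Theory Num.Theory.
Local Open Scope ring_scope.

(* Points of K^k are row vectors 'rV[K]_k; z 0 i is the i-th coordinate. *)

Definition poly_fun_deg (K : fieldType) (k d : nat) (f : 'rV[K]_k -> K) : Prop :=
  exists c : {ffun 'I_k -> 'I_d.+1} -> K,
    (forall a : {ffun 'I_k -> 'I_d.+1}, (d < \sum_(i < k) (a i : nat))%N -> c a = 0) /\
    forall z, f z = \sum_(a : {ffun 'I_k -> 'I_d.+1}) c a * \prod_(i < k) z 0 i ^+ a i.

Definition polymap_deg (K : fieldType) (k l d : nat) (F : 'rV[K]_k -> 'rV[K]_l) : Prop :=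
  forall j : 'I_l, poly_fun_deg d (fun z => F z 0 j).

Definition polymap (K : fieldType) (k l : nat) (F : 'rV[K]_k -> 'rV[K]_l) : Prop :=
  exists d, polymap_deg d F.

Definition Pnd (K : fieldType) (k d : nat) (F : 'rV[K]_k -> 'rV[K]_k) : Prop :=
  polymap_deg d F.

Definition is_dpartial (K : fieldType) (k : nat) (f : 'rV[K]_k -> K)
    (i : 'I_k) (z : 'rV[K]_k) (v : K) : Prop :=
  exists p : {poly K},
    (forall t, p.[t] = f (z + t *: delta_mx 0 i)) /\ (p^`()).[0] = v.

Definition jac_det_is (K : fieldType) (k : nat) (F : 'rV[K]_k -> 'rV[K]_k)
    (z : 'rV[K]_k) (c : K) : Prop :=
  exists M : 'M[K]_k,
    (forall i j, is_dpartial (fun w => F w 0 j) i z (M i j)) /\ \det M = c.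

Definition Jlin (K : fieldType) (k : nat) (F : 'rV[K]_k -> 'rV[K]_k) : Prop :=
  polymap F /\ exists c : K, c != 0 /\ forall z, jac_det_is F z c.

Definition Jinv (K : fieldType) (k : nat) (F : 'rV[K]_k -> 'rV[K]_k) : Prop :=
  polymap F /\ exists G : 'rV[K]_k -> 'rV[K]_k,
    polymap G /\ cancel F G /\ cancel G F.

Definition Jlin_nd (K : fieldType) (k d : nat) (F : 'rV[K]_k -> 'rV[K]_k) : Prop :=
  Pnd d F /\ Jlin F.
Definition Jinv_nd (K : fieldType) (k d : nat) (F : 'rV[K]_k -> 'rV[K]_k) : Prop :=
  Pnd d F /\ Jinv F.

(* Partial versions on K^(n' + m) = K^n' x K^m, z = row_mx z1 z2.
   R(z2; z1) := F2(z1, z2). *)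
Definition Rpart (K : fieldType) (n' m : nat) (F : 'rV[K]_(n' + m) -> 'rV[K]_(n' + m))
    (z1 : 'rV[K]_n') : 'rV[K]_m -> 'rV[K]_m :=
  fun z2 => rsubmx (F (row_mx z1 z2)).

Definition Jinv_part (K : fieldType) (n' m d : nat)
    (F : 'rV[K]_(n' + m) -> 'rV[K]_(n' + m)) : Prop :=
  [/\ Pnd d F,
      (forall z1, Jinv (Rpart F z1)) &
      (* F restricted to F^{-1}(K^n' x {0}) is a bijection onto K^n' x {0},
         with polynomial inverse y1 |-> F^{-1}(y1, 0) *)
      exists G : 'rV[K]_n' -> 'rV[K]_(n' + m),
        [/\ polymap G,
            (forall y1, F (G y1) = row_mx y1 0) &
            (forall y1 z, F z = row_mx y1 0 -> z = G y1)]].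

(* J^lin_{n,d;n'}: det J_F(z1, R^{-1}(0;z1)) = c, where R^{-1}(0;z1) is the
   unique z2 with R(z2;z1) = 0. *)
Definition Jlin_part (K : fieldType) (n' m d : nat)
    (F : 'rV[K]_(n' + m) -> 'rV[K]_(n' + m)) : Prop :=
  [/\ Pnd d F,
      (forall z1, Jinv (Rpart F z1)) &
      exists c : K, c != 0 /\
        forall z1 z2, Rpart F z1 z2 = 0 -> jac_det_is F (row_mx z1 z2) c].

From HB Require Import structures.
From mathcomp Require Import all_boot all_order all_algebra ring.
From Stdlib Require Import ClassicalEpsilon FunctionalExtensionality.
Import GRing.Theory Num.Theory.
Local Open Scope ring_scope.
Set Implicit Arguments. Unset Strict Implicit. Unset Printing Implicit Defensive.

(* [Phi F] replaces, in every monomial of degree at least 2 of a coordinate of [F], a factor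
   [z_x z_y] by a new variable [w_(x,y)], and appends the coordinates [w - z ⊗ z]. It has
   degree at most [d - 1] and equals [(F, 0)] on the graph [w = z ⊗ z], which is exactly the
   zero set of its last [n^2] coordinates. So [F] is recovered from [Phi F], every partial
   system [w |-> w - z ⊗ z] is a translation, and the inverses of [F] and of [Phi F] along
   [K^n x {0}] determine each other. On the graph, the Jacobian matrix of [Phi F] is the block
   matrix [[A, -D], [C, 1]], with [D] the derivative of [z |-> z ⊗ z], while the chain rule
   gives [J_F = A + D C]: the two determinants agree by the Schur complement formula. *)

Section TermLists.
Variables (K : fieldType) (k : nat).

(* A term [(c, s)] stands for [c * z_(s_1) * ... * z_(s_m)]; repetitions in [s] encode powers. *)
Definition eval_terms (L : seq (K * seq 'I_k)) (z : 'rV[K]_k) : K :=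
  \sum_(t <- L) t.1 * \prod_(i <- t.2) z 0 i.

Definition is_term_rep (d : nat) (f : 'rV[K]_k -> K) (L : seq (K * seq 'I_k)) :=
  all (fun t => size t.2 <= d)%N L /\ f =1 eval_terms L.

Lemma eval_terms_cons t L z :
  eval_terms (t :: L) z = t.1 * \prod_(i <- t.2) z 0 i + eval_terms L z.
Proof. by rewrite /eval_terms big_cons. Qed.

Lemma prod_count_mem (s : seq 'I_k) (F : 'I_k -> K) :
  \prod_(i <- s) F i = \prod_i F i ^+ count_mem i s.
Proof.
elim: s => [|x s IH]; first by rewrite big_nil big1 // => i _; rewrite expr0.
rewrite big_cons IH /=; under [RHS]eq_bigr do rewrite exprD.
rewrite big_split /=; congr (_ * _).
rewrite (bigD1 x) //= eqxx expr1 big1 ?mulr1 // => i /negbTE.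
by rewrite eq_sym => ->; rewrite expr0.
Qed.

Lemma sum_count_mem (s : seq 'I_k) : (\sum_i count_mem i s)%N = size s.
Proof.
elim: s => [|x s IH]; first by rewrite big1.
rewrite /= big_split /= IH (bigD1 x) //= eqxx big1 // => i /negbTE.
by rewrite eq_sym => ->.
Qed.

Lemma poly_fun_degP d (f : 'rV[K]_k -> K) :
  poly_fun_deg d f <-> exists L, is_term_rep d f L.
Proof.
split=> [[c [c_deg f_eq]] | [L [L_deg f_eq]]].
  pose mono (a : {ffun 'I_k -> 'I_d.+1}) :=
    flatten [seq nseq (a i) i | i <- enum 'I_k].
  have prod_mono a (z : 'rV[K]_k) : \prod_(i <- mono a) z 0 i = \prod_i z 0 i ^+ a i.
    rewrite big_flatten /= big_map big_enum /=; apply: eq_bigr => i _.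
    by rewrite big_nseq iter_mulr_1.
  have size_mono a : size (mono a) = (\sum_i (a i : nat))%N.
    rewrite size_flatten /shape -map_comp sumnE big_map big_enum /=.
    by apply: eq_bigr => i _; rewrite /= size_nseq.
  exists [seq (c a, if (\sum_i (a i : nat) <= d)%N then mono a else [::])
         | a <- enum {ffun 'I_k -> 'I_d.+1}]; split.
    by rewrite all_map; apply/allP => a _ /=; case: ifP; rewrite ?size_mono.
  move=> z; rewrite f_eq /eval_terms big_map big_enum /=; apply: eq_bigr => a _.
  case: ifP => [_|]; first by rewrite prod_mono.
  by move/negbT; rewrite -ltnNge => /c_deg ->; rewrite !mul0r.
pose exps (s : seq 'I_k) : {ffun 'I_k -> 'I_d.+1} := [ffun i => inord (count_mem i s)].
have expsE t i : t \in L -> (exps t.2 i : nat) = count_mem i t.2.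
  move=> tL; rewrite ffunE inordK // ltnS.
  exact: leq_trans (count_size _ _) (allP L_deg t tL).
exists (fun a => \sum_(t <- L | exps t.2 == a) t.1); split.
  move=> a a_deg; rewrite big_seq_cond big1 // => t /andP [tL /eqP ta].
  move: a_deg; rewrite -ta (eq_bigr (fun i => count_mem i t.2)) => [|i _]; last exact: expsE.
  by rewrite sum_count_mem ltnNge (allP L_deg t tL).
move=> z; rewrite f_eq /eval_terms; under [RHS]eq_bigr do rewrite big_distrl /= big_mkcond /=.
rewrite [RHS]exchange_big /= big_seq [RHS]big_seq; apply: eq_bigr => t tL.
rewrite -big_mkcond /= (big_pred1 (exps t.2)) => [|a]; last by rewrite eq_sym.
rewrite prod_count_mem; congr (_ * _); apply: eq_bigr => i _; by rewrite expsE.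
Qed.

Lemma eq_poly_fun_deg d (f g : 'rV[K]_k -> K) :
  f =1 g -> poly_fun_deg d f -> poly_fun_deg d g.
Proof. by move=> fg [c [c_deg f_eq]]; exists c; split=> // z; rewrite -fg. Qed.

Lemma poly_fun_deg_le d e (f : 'rV[K]_k -> K) :
  (d <= e)%N -> poly_fun_deg d f -> poly_fun_deg e f.
Proof.
move=> le_de /poly_fun_degP[L [L_deg f_eq]]; apply/poly_fun_degP; exists L.
by split=> //; apply/allP => t tL; apply: leq_trans le_de; exact: (allP L_deg).
Qed.

Lemma poly_fun_deg_cst (c : K) : poly_fun_deg 0 (fun _ : 'rV[K]_k => c).
Proof.
apply/poly_fun_degP; exists [:: (c, [::])]; split=> // z.
by rewrite eval_terms_cons /eval_terms !big_nil mulr1 addr0.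
Qed.

Lemma poly_fun_deg_coord (i : 'I_k) : poly_fun_deg 1 (fun z : 'rV[K]_k => z 0 i).
Proof.
apply/poly_fun_degP; exists [:: (1, [:: i])]; split=> // z.
by rewrite eval_terms_cons /eval_terms big_nil big_seq1 mul1r addr0.
Qed.

Lemma poly_fun_degD d (f g : 'rV[K]_k -> K) :
  poly_fun_deg d f -> poly_fun_deg d g -> poly_fun_deg d (fun z => f z + g z).
Proof.
move=> /poly_fun_degP[L1 [L1_deg f_eq]] /poly_fun_degP[L2 [L2_deg g_eq]].
apply/poly_fun_degP; exists (L1 ++ L2); split; first by rewrite all_cat L1_deg.
by move=> z; rewrite f_eq g_eq /eval_terms big_cat.
Qed.

Lemma poly_fun_degN d (f : 'rV[K]_k -> K) :
  poly_fun_deg d f -> poly_fun_deg d (fun z => - f z).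
Proof.
move=> /poly_fun_degP[L [L_deg f_eq]]; apply/poly_fun_degP.
exists [seq (- t.1, t.2) | t <- L]; split; first by rewrite all_map.
by move=> z; rewrite f_eq /eval_terms big_map -sumrN; apply: eq_bigr => t _; rewrite mulNr.
Qed.

Lemma poly_fun_degM d e (f g : 'rV[K]_k -> K) :
  poly_fun_deg d f -> poly_fun_deg e g -> poly_fun_deg (d + e) (fun z => f z * g z).
Proof.
move=> /poly_fun_degP[L1 [L1_deg f_eq]] /poly_fun_degP[L2 [L2_deg g_eq]].
apply/poly_fun_degP; exists [seq (t.1 * u.1, t.2 ++ u.2) | t <- L1, u <- L2]; split.
  apply/allP => x /allpairsP [[t u] /= [tL1 uL2 ->]] /=.
  by rewrite size_cat leq_add //; [exact: (allP L1_deg) | exact: (allP L2_deg)].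
move=> z; rewrite f_eq g_eq /eval_terms big_distrlr big_allpairs_dep /=.
by apply: eq_bigr => t _; apply: eq_bigr => u _; rewrite big_cat mulrACA.
Qed.

Lemma polymapP l (F : 'rV[K]_k -> 'rV[K]_l) :
  polymap F <-> forall j, exists d, poly_fun_deg d (fun z => F z 0 j).
Proof.
split=> [[d F_deg] j | F_deg]; first by exists d.
have [D D_deg] := fin_all_exists F_deg; exists (\max_j D j) => j.
exact: poly_fun_deg_le (leq_bigmax j) (D_deg j).
Qed.

End TermLists.

Section TensorSquare.
Variables (R : comNzRingType) (n : nat).

Definition tensor_sq (z : 'rV[R]_n) : 'rV[R]_(n * n) := mxvec (z^T *m z).

Definition graph_sq (z : 'rV[R]_n) : 'rV[R]_(n + n * n) := row_mx z (tensor_sq z).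

Lemma tensor_sqE z i j : tensor_sq z 0 (mxvec_index i j) = z 0 i * z 0 j.
Proof. by rewrite mxvecE !mxE big_ord1 !mxE. Qed.

End TensorSquare.

Definition curve_at (K : fieldType) k (c : 'rV[{poly K}]_k) (t : K) : 'rV[K]_k :=
  map_mx (horner_eval t) c.

Lemma curve_atE (K : fieldType) k (c : 'rV[{poly K}]_k) t m :
  curve_at c t 0 m = (c 0 m).[t].
Proof. by rewrite mxE horner_evalE. Qed.

Lemma curve_at_tensor_sq (K : fieldType) n (c : 'rV[{poly K}]_n) t :
  curve_at (tensor_sq c) t = tensor_sq (curve_at c t).
Proof. by rewrite /curve_at /tensor_sq map_mxvec map_mxM map_trmx. Qed.

Lemma curve_at_graph_sq (K : fieldType) n (c : 'rV[{poly K}]_n) t :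
  curve_at (graph_sq c) t = graph_sq (curve_at c t).
Proof. by rewrite /curve_at /graph_sq map_row_mx -curve_at_tensor_sq. Qed.

Section Gradients.
Variables (K : fieldType) (k : nat).

Definition is_grad (f : 'rV[K]_k -> K) (z g : 'rV[K]_k) : Prop :=
  forall c : 'rV[{poly K}]_k, curve_at c 0 = z ->
    exists p : {poly K}, (forall t, p.[t] = f (curve_at c t)) /\
                         p^`().[0] = \sum_m (c 0 m)^`().[0] * g 0 m.

Lemma eq_is_grad (f f' : 'rV[K]_k -> K) z g : f =1 f' -> is_grad f z g -> is_grad f' z g.
Proof.
move=> ff' f_grad c cz; have [p [p_eq p_der]] := f_grad c cz.
by exists p; split=> // t; rewrite p_eq ff'.
Qed.

Lemma is_grad_cst (a : K) z : is_grad (fun _ => a) z 0.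
Proof.
move=> c _; exists a%:P; split=> [t|]; first by rewrite hornerC.
by rewrite derivC horner0 big1 // => m _; rewrite mxE mulr0.
Qed.

Lemma sum_mul_delta (F : 'I_k -> K) i : \sum_m F m * (delta_mx 0 i : 'rV[K]_k) 0 m = F i.
Proof.
rewrite (bigD1 i) //= mxE !eqxx mulr1 big1 ?addr0 // => m /negbTE mi.
by rewrite mxE mi andbF mulr0.
Qed.

Lemma is_grad_coord i z : is_grad (fun v => v 0 i) z (delta_mx 0 i).
Proof.
move=> c _; exists (c 0 i); split=> [t|]; first by rewrite mxE.
by rewrite sum_mul_delta.
Qed.

(* Otherwise [z] is implicit, being inferable from the unfolded [is_grad]. *)
Arguments is_grad_cst a z : clear implicits.
Arguments is_grad_coord i z : clear implicits.

Lemma is_gradD (f h : 'rV[K]_k -> K) z g1 g2 :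
  is_grad f z g1 -> is_grad h z g2 -> is_grad (fun v => f v + h v) z (g1 + g2).
Proof.
move=> f_grad h_grad c cz.
have [p1 [p1_eq p1_der]] := f_grad c cz; have [p2 [p2_eq p2_der]] := h_grad c cz.
exists (p1 + p2); split=> [t|]; first by rewrite hornerD p1_eq p2_eq.
rewrite derivD hornerD p1_der p2_der -big_split /=.
by apply: eq_bigr => m _; rewrite mxE mulrDr.
Qed.

Lemma is_gradM (f h : 'rV[K]_k -> K) z g1 g2 :
  is_grad f z g1 -> is_grad h z g2 ->
  is_grad (fun v => f v * h v) z (f z *: g2 + h z *: g1).
Proof.
move=> f_grad h_grad c cz.
have [p1 [p1_eq p1_der]] := f_grad c cz; have [p2 [p2_eq p2_der]] := h_grad c cz.
exists (p1 * p2); split=> [t|]; first by rewrite hornerM p1_eq p2_eq.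
rewrite derivM hornerD !hornerM p1_der p2_der p1_eq p2_eq cz.
rewrite big_distrl big_distrr -big_split /=; apply: eq_bigr => m _.
by rewrite !mxE; ring.
Qed.

Lemma exists_grad_prod_coords (s : seq 'I_k) z :
  exists g, is_grad (fun v => \prod_(i <- s) v 0 i) z g.
Proof.
elim: s => [|i s [g IH]].
  by exists 0; apply: eq_is_grad (is_grad_cst 1 z) => v; rewrite big_nil.
eexists; apply: eq_is_grad (is_gradM (is_grad_coord i z) IH) => v.
by rewrite big_cons.
Qed.

Lemma exists_grad_poly_fun d (f : 'rV[K]_k -> K) z :
  poly_fun_deg d f -> exists g, is_grad f z g.
Proof.
move=> /poly_fun_degP[L [_ f_eq]].
suff [g L_grad] : exists g, is_grad (eval_terms L) z g.
  by exists g; apply: eq_is_grad L_grad => v; rewrite f_eq.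
elim: L {f_eq} => [|t L [g IH]].
  by exists 0; apply: eq_is_grad (is_grad_cst 0 z) => v; rewrite /eval_terms big_nil.
have [g1 t_grad] := exists_grad_prod_coords t.2 z.
eexists; apply: eq_is_grad (is_gradD (is_gradM (is_grad_cst t.1 z) t_grad) IH) => v.
by rewrite eval_terms_cons.
Qed.

Definition line (z v : 'rV[K]_k) : 'rV[{poly K}]_k := \row_m ((z 0 m)%:P + v 0 m *: 'X).

Lemma curve_at_line z v t : curve_at (line z v) t = z + t *: v.
Proof. by apply/rowP => m; rewrite curve_atE !mxE hornerD hornerC hornerZ hornerX mulrC. Qed.

Lemma deriv_line z v m : ((line z v) 0 m)^`().[0] = v 0 m.
Proof. by rewrite mxE derivD derivC derivZ derivX add0r alg_polyC hornerC. Qed.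

Lemma dpartial_of_grad (f : 'rV[K]_k -> K) z g i :
  is_grad f z g -> is_dpartial f i z (g 0 i).
Proof.
move=> f_grad; have [|p [p_eq p_der]] := f_grad (line z (delta_mx 0 i)).
  by rewrite curve_at_line scale0r addr0.
exists p; split=> [t|]; first by rewrite p_eq curve_at_line.
rewrite p_der -(sum_mul_delta (g 0) i); apply: eq_bigr => m _.
by rewrite deriv_line mulrC.
Qed.

End Gradients.

Lemma poly_horner_inj (K : numFieldType) (p q : {poly K}) :
  (forall t, p.[t] = q.[t]) -> p = q.
Proof.
move=> pq; apply/eqP; rewrite -subr_eq0; apply/negPn/negP => pq_neq0.
suff: (size [seq i%:R : K | i <- iota 0 (size (p - q)%R)] < size (p - q)%R)%N.
  by rewrite size_map size_iota ltnn.
apply: max_poly_roots pq_neq0 _ _.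
  by apply/allP => x _; rewrite /root hornerD hornerN pq subrr.
by rewrite map_inj_uniq ?iota_uniq // => x y /eqP; rewrite eqr_nat => /eqP.
Qed.

Lemma dpartial_unique (K : numFieldType) k (f : 'rV[K]_k -> K) i z u v :
  is_dpartial f i z u -> is_dpartial f i z v -> u = v.
Proof.
move=> [p [p_eq <-]] [q [q_eq <-]].
by rewrite (@poly_horner_inj _ p q) // => t; rewrite p_eq q_eq.
Qed.

Lemma det_block_schur (R : comNzRingType) m1 m2 (A : 'M[R]_m1) (B : 'M[R]_(m1, m2))
    (C : 'M[R]_(m2, m1)) :
  \det (block_mx A (- B) C 1%:M) = \det (A + B *m C).
Proof.
have -> : block_mx A (- B) C 1%:M =
          block_mx 1%:M (- B) 0 1%:M *m block_mx (A + B *m C) 0 C 1%:M.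
  by rewrite mulmx_block !mul1mx !mul0mx !mulmx1 !add0r mulNmx addrK.
by rewrite det_mulmx det_ublock det_lblock !det1 !mul1r mulr1.
Qed.

Lemma polymap_graph_sq (K : fieldType) k n (G : 'rV[K]_k -> 'rV[K]_n) :
  polymap G -> polymap (fun y => graph_sq (G y)).
Proof.
move=> /polymapP G_poly; apply/polymapP => j; rewrite -(splitK j).
case: (split j) => /= [i | l].
  have [e G_deg] := G_poly i.
  by exists e; apply: eq_poly_fun_deg G_deg => y; rewrite /graph_sq row_mxEl.
case/mxvec_indexP: l => i1 i2.
have [e1 G1_deg] := G_poly i1; have [e2 G2_deg] := G_poly i2.
exists (e1 + e2)%N; apply: eq_poly_fun_deg (poly_fun_degM G1_deg G2_deg) => y.
by rewrite /graph_sq row_mxEr tensor_sqE.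
Qed.

Lemma Jinv_translate (K : fieldType) k (a : 'rV[K]_k) : Jinv (fun w => w + a).
Proof.
have translate_poly b : polymap (fun w : 'rV[K]_k => w + b).
  apply/polymapP => j; exists 1%N.
  have cst_deg := poly_fun_deg_le (leq0n 1) (poly_fun_deg_cst k (b 0 j)).
  by apply: eq_poly_fun_deg (poly_fun_degD (poly_fun_deg_coord K j) cst_deg) => w; rewrite mxE.
split; first exact: translate_poly.
by exists (fun w => w + - a); split; [exact: translate_poly | split=> w; rewrite ?addrK ?subrK].
Qed.

Section DegreeReduction.
Variables (K : numFieldType) (n d : nat).
Hypothesis d_gt2 : (2 < d)%N.
Local Notation N := (n * n)%N.

(* The factor [z_x * z_y] of a monomial becomes the new variable [w_(x,y)], so that
   the monomial's value at [graph_sq z] is unchanged and its degree drops by one. *)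
Definition lower_mono (s : seq 'I_n) : seq 'I_(n + N) :=
  if s is x :: y :: r then rshift n (mxvec_index x y) :: map (lshift N) r
  else map (lshift N) s.

Lemma prod_lower_mono s (z : 'rV[K]_n) :
  \prod_(i <- lower_mono s) graph_sq z 0 i = \prod_(i <- s) z 0 i.
Proof.
have prod_lshift r : \prod_(i <- map (lshift N) r) graph_sq z 0 i = \prod_(i <- r) z 0 i.
  by rewrite big_map; apply: eq_bigr => i _; rewrite /graph_sq row_mxEl.
case: s => [|x [|y r]]; try exact: prod_lshift.
by rewrite /lower_mono big_cons prod_lshift /graph_sq row_mxEr tensor_sqE !big_cons mulrA.
Qed.

Lemma size_lower_mono s : (size (lower_mono s) < maxn 2 (size s))%N.
Proof. by case: s => [|x [|y r]] //=; rewrite size_map // leq_maxr. Qed.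

Definition lower_terms (L : seq (K * seq 'I_n)) : seq (K * seq 'I_(n + N)) :=
  [seq (t.1, lower_mono t.2) | t <- L].

Lemma eval_lower_terms L (z : 'rV[K]_n) :
  eval_terms (lower_terms L) (graph_sq z) = eval_terms L z.
Proof.
by rewrite /eval_terms big_map; apply: eq_bigr => t _; rewrite prod_lower_mono.
Qed.

Lemma lower_terms_deg (f : 'rV[K]_n -> K) L : (1 < d)%N -> is_term_rep d f L ->
  all (fun t => size t.2 <= d.-1)%N (lower_terms L).
Proof.
move=> d_gt1 [L_deg _]; rewrite all_map; apply/allP => t /(allP L_deg) /= t_deg.
rewrite -ltnS (prednK (ltnW d_gt1)).
by apply: leq_trans (size_lower_mono t.2) _; rewrite geq_max d_gt1.
Qed.

Definition term_rep (f : 'rV[K]_n -> K) : seq (K * seq 'I_n) :=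
  epsilon (inhabits [::]) (is_term_rep d f).

Lemma term_repP (f : 'rV[K]_n -> K) : poly_fun_deg d f -> is_term_rep d f (term_rep f).
Proof.
by move/poly_fun_degP => L_rep; apply: (epsilon_spec (inhabits [::]) (is_term_rep d f)).
Qed.

Definition Phi (F : 'rV[K]_n -> 'rV[K]_n) (v : 'rV[K]_(n + N)) : 'rV[K]_(n + N) :=
  row_mx (\row_j eval_terms (lower_terms (term_rep (fun z => F z 0 j))) v)
         (rsubmx v - tensor_sq (lsubmx v)).

Lemma Phi_row_mx F z w : Phi F (row_mx z w) =
  row_mx (\row_j eval_terms (lower_terms (term_rep (fun z => F z 0 j))) (row_mx z w))
         (w - tensor_sq z).
Proof. by rewrite /Phi row_mxKl row_mxKr. Qed.

Lemma Phi_graph_sq F z : Pnd d F -> Phi F (graph_sq z) = row_mx (F z) 0.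
Proof.
move=> F_deg; rewrite /graph_sq Phi_row_mx subrr; congr row_mx.
apply/rowP => j; rewrite mxE -/(graph_sq z) eval_lower_terms.
by have [_ <-] := term_repP (F_deg j).
Qed.

Lemma Phi_eq_row0 F z w y : Pnd d F -> Phi F (row_mx z w) = row_mx y 0 ->
  w = tensor_sq z /\ F z = y.
Proof.
move=> F_deg Phi_zw; have w_eq : w = tensor_sq z.
  by apply/subr0_eq; move: Phi_zw; rewrite Phi_row_mx => /eq_row_mx[].
split=> //; move: Phi_zw; rewrite w_eq -/(graph_sq z) Phi_graph_sq //.
by case/eq_row_mx.
Qed.

Lemma Pnd_Phi F : Pnd d F -> Pnd d.-1 (Phi F).
Proof.
move=> F_deg j; rewrite -(splitK j); case: (split j) => /= [i | l].
  apply/poly_fun_degP; exists (lower_terms (term_rep (fun z => F z 0 i))); split.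
    exact: lower_terms_deg (ltnW d_gt2) (term_repP (F_deg i)).
  by move=> v; rewrite /Phi row_mxEl mxE.
case/mxvec_indexP: l => i1 i2.
have d1_gt1 : (1 < d.-1)%N by case: d d_gt2 => [|[|[|]]].
apply: (@eq_poly_fun_deg _ _ _
  (fun v => v 0 (rshift n (mxvec_index i1 i2)) - v 0 (lshift N i1) * v 0 (lshift N i2))).
  by move=> v; rewrite /Phi row_mxEr !mxE tensor_sqE !mxE.
apply: poly_fun_degD; first exact: poly_fun_deg_le (ltnW d1_gt1) (poly_fun_deg_coord _ _).
apply: poly_fun_degN; apply: poly_fun_deg_le d1_gt1 _.
exact: poly_fun_degM (poly_fun_deg_coord _ _) (poly_fun_deg_coord _ _).
Qed.

Lemma Phi_inj F G : Pnd d F -> Pnd d G -> Phi F = Phi G -> F = G.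
Proof.
move=> F_deg G_deg FG; apply: functional_extensionality => z.
by have := Phi_graph_sq z F_deg; rewrite FG Phi_graph_sq // => /eq_row_mx[].
Qed.

Lemma Rpart_Phi F z w : Rpart (Phi F) z w = w - tensor_sq z.
Proof. by rewrite /Rpart Phi_row_mx row_mxKr. Qed.

Lemma Jinv_Rpart_Phi F z : Jinv (Rpart (Phi F) z).
Proof.
have -> : Rpart (Phi F) z = (fun w => w + - tensor_sq z).
  by apply: functional_extensionality => w; rewrite Rpart_Phi.
exact: Jinv_translate.
Qed.

Lemma Jinv_part_Phi F : Pnd d F -> Jinv F -> Jinv_part d.-1 (Phi F).
Proof.
move=> F_deg [_ [G [G_poly [FK GK]]]]; split; [exact: Pnd_Phi | exact: Jinv_Rpart_Phi |].
exists (fun y => graph_sq (G y)); split; first exact: polymap_graph_sq.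
  by move=> y; rewrite Phi_graph_sq // GK.
move=> y v; rewrite -[v]hsubmxK => /Phi_eq_row0[// | -> <-].
by rewrite FK.
Qed.

Lemma Jinv_of_Jinv_part_Phi F : Pnd d F -> Jinv_part d.-1 (Phi F) -> Jinv F.
Proof.
move=> F_deg [_ _ [G [G_poly G_sect G_uniq]]]; split; first by exists d.
exists (fun y => lsubmx (G y)); split; [| split].
- move/polymapP: G_poly => G_poly; apply/polymapP => j.
  have [e G_deg] := G_poly (lshift _ j).
  by exists e; apply: eq_poly_fun_deg G_deg => y; rewrite mxE.
- by move=> z; rewrite -(G_uniq _ _ (Phi_graph_sq z F_deg)) row_mxKl.
- by move=> y; move: (G_sect y); rewrite -{1}[G y]hsubmxK => /(Phi_eq_row0 F_deg)[].
Qed.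

Definition dtensor_sq (z : 'rV[K]_n) : 'M[K]_(n, N) :=
  \matrix_(i, l) ((tensor_sq (line z (delta_mx 0 i))) 0 l)^`().[0].

Lemma dpartial_Phi_tensor F z k l :
  is_dpartial (fun v => Phi F v 0 (rshift n l)) k (graph_sq z)
              (col_mx (- dtensor_sq z) 1%:M k l).
Proof.
rewrite -(splitK k); case: (split k) => /= i.
  rewrite col_mxEu !mxE.
  exists ((tensor_sq z 0 l)%:P - tensor_sq (line z (delta_mx 0 i)) 0 l); split.
    move=> t; rewrite /graph_sq delta_mx_lshift scale_row_mx add_row_mx scaler0 addr0.
    rewrite Phi_row_mx row_mxEr !mxE hornerD hornerN hornerC -curve_atE.
    by rewrite curve_at_tensor_sq curve_at_line.
  by rewrite derivB derivC sub0r hornerN.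
rewrite col_mxEd; exists ((1%:M : 'M[K]_N) i l *: 'X); split.
  move=> t; rewrite /graph_sq delta_mx_rshift scale_row_mx add_row_mx scaler0 addr0.
  by rewrite Phi_row_mx row_mxEr !mxE addrAC subrr add0r hornerZ hornerX mulrC eqxx eq_sym.
by rewrite derivZ derivX alg_polyC hornerC.
Qed.

Lemma dpartial_chain F z g i j : Pnd d F ->
  is_grad (fun v => Phi F v 0 (lshift N j)) (graph_sq z) g ->
  is_dpartial (fun v => F v 0 j) i z (\sum_m row_mx 1%:M (dtensor_sq z) i m * g 0 m).
Proof.
move=> F_deg g_grad; pose c := graph_sq (line z (delta_mx 0 i)).
have [|p [p_eq p_der]] := g_grad c.
  by rewrite curve_at_graph_sq curve_at_line scale0r addr0.
exists p; split=> [t|].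
  by rewrite p_eq curve_at_graph_sq curve_at_line Phi_graph_sq // row_mxEl.
rewrite p_der; apply: eq_bigr => m _; congr (_ * _).
rewrite -(splitK m); case: (split m) => /= m'.
  by rewrite /c /graph_sq !row_mxEl deriv_line !mxE eq_sym.
by rewrite /c /graph_sq !row_mxEr mxE.
Qed.

Lemma jac_det_Phi F z c : Pnd d F ->
  jac_det_is F z c <-> jac_det_is (Phi F) (graph_sq z) c.
Proof.
move=> F_deg.
have [G G_grad] := fin_all_exists (fun j : 'I_n =>
  exists_grad_poly_fun (graph_sq z) (Pnd_Phi F_deg (lshift N j))).
pose A := \matrix_(m, j) G j 0 m.
pose JPhi := row_mx A (col_mx (- dtensor_sq z) 1%:M).
pose JF := row_mx 1%:M (dtensor_sq z) *m A.
have dPhi k j : is_dpartial (fun v => Phi F v 0 j) k (graph_sq z) (JPhi k j).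
  rewrite /JPhi -(splitK j); case: (split j) => /= j'.
    by rewrite row_mxEl mxE; exact: dpartial_of_grad (G_grad j').
  by rewrite row_mxEr; exact: dpartial_Phi_tensor.
have dF i j : is_dpartial (fun v => F v 0 j) i z (JF i j).
  rewrite /JF mxE (eq_bigr (fun m => row_mx 1%:M (dtensor_sq z) i m * G j 0 m)).
    exact: dpartial_chain (G_grad j).
  by move=> m _; rewrite [A _ _]mxE.
have det_JPhi : \det JPhi = \det JF.
  by rewrite /JPhi /JF -[A]vsubmxK -block_mxEh det_block_schur mul_row_col mul1mx.
split=> -[M [M_dpartial <-]].
  exists JPhi; split=> //; rewrite det_JPhi; congr (\det _).
  by apply/matrixP => i j; exact: dpartial_unique (dF i j) (M_dpartial i j).
exists JF; split=> //; rewrite -det_JPhi; congr (\det _).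
by apply/matrixP => k j; exact: dpartial_unique (dPhi k j) (M_dpartial k j).
Qed.

Lemma Jlin_part_Phi F : Pnd d F -> Jlin F -> Jlin_part d.-1 (Phi F).
Proof.
move=> F_deg [_ [c [c_neq0 F_jac]]]; split; [exact: Pnd_Phi | exact: Jinv_Rpart_Phi |].
exists c; split=> // z w; rewrite Rpart_Phi => /subr0_eq ->.
exact/jac_det_Phi.
Qed.

Lemma Jlin_of_Jlin_part_Phi F : Pnd d F -> Jlin_part d.-1 (Phi F) -> Jlin F.
Proof.
move=> F_deg [_ _ [c [c_neq0 Phi_jac]]]; split; first by exists d.
exists c; split=> // z; apply/(jac_det_Phi _ _ F_deg)/Phi_jac.
by rewrite Rpart_Phi subrr.
Qed.

End DegreeReduction.

Theorem mainTheorem1 (K : numClosedFieldType) (n d : nat) (hd : (3 <= d)%N) :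
  exists Phi : ('rV[K]_n -> 'rV[K]_n) -> ('rV[K]_(n + n * n) -> 'rV[K]_(n + n * n)),
    [/\ (forall F, Pnd d F -> Pnd d.-1 (Phi F)),
        (forall F G, Pnd d F -> Pnd d G -> Phi F = Phi G -> F = G),
        (forall H, (exists F, Jlin_nd d F /\ H = Phi F) <->
                   (Jlin_part d.-1 H /\ exists F, Pnd d F /\ H = Phi F)) &
        (forall H, (exists F, Jinv_nd d F /\ H = Phi F) <->
                   (Jinv_part d.-1 H /\ exists F, Pnd d F /\ H = Phi F))].
Proof.
exists (@Phi K n d); split.
- by move=> F; exact: Pnd_Phi.
- by move=> F G; exact: Phi_inj.
- move=> H; split=> [[F [[F_deg F_Jlin] ->]] | [H_Jlin [F [F_deg H_eq]]]].
    by split; [exact: Jlin_part_Phi | exists F].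
  by subst H; exists F; split=> //; split=> //; exact: Jlin_of_Jlin_part_Phi H_Jlin.
- move=> H; split=> [[F [[F_deg F_Jinv] ->]] | [H_Jinv [F [F_deg H_eq]]]].
    by split; [exact: Jinv_part_Phi | exists F].
  by subst H; exists F; split=> //; split=> //; exact: Jinv_of_Jinv_part_Phi H_Jinv.
Qed.
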